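(* Let $\mathfrak n$ be a non-singular 2-step nilpotent real Lie algebra with center $\mathfrak z$ such that $\dim\mathfrak n>3\dim\mathfrak z$. Then every closed 2-form $\omega$ on $\mathfrak n$ satisfies $\omega(Z,U)=0$ for all $Z\in\mathfrak z$ and $U\in\mathfrak n$.
   Context: A real Lie algebra $\mathfrak n$ is 2-step nilpotent if $[[U,V],W]=0$ for all $U,V,W$ and $\mathfrak n$ is not abelian. It is non-singular if for every $X\in\mathfrak n\setminus\mathfrak z$ the map $\mathrm{ad}(X):\mathfrak n\to\mathfrak z$, $Y\mapsto[X,Y]$, is onto $\mathfrak z$. A 2-form on $\mathfrak n$ is an alternating bilinear form $\omega$ on $\mathfrak n$; it is closed iff $\omega([U,V],W)+\omega([V,W],U)+\omega([W,U],V)=0$ for all $U,V,W\in\mathfrak n$. *)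

From mathcomp Require Import all_boot all_order all_algebra.
From mathcomp Require Import reals.
Set Implicit Arguments. Unset Strict Implicit. Unset Printing Implicit Defensive.
Import GRing.Theory.
Local Open Scope ring_scope.

Section LieDefs.
Variables (R : realType) (V : vectType R).

Definition bilinear_map (W : lmodType R) (f : V -> V -> W) : Prop :=
  (forall a x y z, f (a *: x + y) z = a *: f x z + f y z) /\
  (forall a x y z, f z (a *: x + y) = a *: f z x + f z y).

Definition alternating_map (W : lmodType R) (f : V -> V -> W) : Prop :=
  forall x, f x x = 0.

Definition is_lie_bracket (br : V -> V -> V) : Prop :=
  [/\ bilinear_map br, alternating_map br &
      forall x y z, br x (br y z) + br y (br z x) + br z (br x y) = 0].

Definition two_step_nilpotent (br : V -> V -> V) : Prop :=
  is_lie_bracket br /\ (forall u v w, br (br u v) w = 0) /\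
  (exists u v, br u v <> 0).

Definition is_center (br : V -> V -> V) (Z : {vspace V}) : Prop :=
  forall x, x \in Z <-> (forall y, br x y = 0).

Definition non_singular (br : V -> V -> V) (Z : {vspace V}) : Prop :=
  forall x, x \notin Z -> forall z, z \in Z -> exists y, br x y = z.

Definition two_form (w : V -> V -> R^o) : Prop :=
  bilinear_map w /\ alternating_map w.

Definition closed_form (br : V -> V -> V) (w : V -> V -> R^o) : Prop :=
  forall u v x, w (br u v) x + w (br v x) u + w (br x u) v = 0.

End LieDefs.

From HB Require Import structures.
From mathcomp Require Import all_boot all_order all_algebra zify.
From mathcomp Require Import reals.
Set Implicit Arguments. Unset Strict Implicit. Unset Printing Implicit Defensive.
Import GRing.Theory.
Local Open Scope ring_scope.

(* If w(z, u) <> 0 for some central z, consider the form b(x, y) = w([x, y], u).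
   By non-singularity every x outside the center satisfies [x, y] = z for some y,
   so the radical of b lies in the center.  Closedness of w makes the centralizer
   C of u totally b-isotropic, hence 2 dim C <= dim n + dim z; and since ad u maps
   into the center, dim C >= dim n - dim z.  Together dim n <= 3 dim z. *)

Definition linear_of (R : pzRingType) (U W : lmodType R) (f : U -> W)
  (fL : linear f) : {linear U -> W} :=
  HB.pack f (GRing.isLinear.Build R U W *:%R f fL).

Section LinearAlgebra.
Variable K : fieldType.

Lemma mxrank_isotropic m n (S : 'M[K]_(m, n)) (B : 'M[K]_n) :
  S *m B *m S^T = 0 -> (2 * \rank S <= n + \rank (kermx B))%N.
Proof.
move=> SBS0.
have rankS := mxrank_mul_ker S B.
have capK : (\rank (S :&: kermx B) <= \rank (kermx B))%N.
  by rewrite mxrankS ?capmxSr.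
have S_ker : (S <= kermx (S *m B)^T)%MS.
  by rewrite sub_kermx -[S in S *m _]trmxK -trmx_mul SBS0 trmx0.
have := mxrankS S_ker; rewrite mxrank_ker mxrank_tr.
have := rank_leq_col (S *m B).
lia.
Qed.

Lemma mulmx_trE m n p (A : 'M[K]_(m, n)) (G : 'M_n) (B : 'M_(p, n)) i j :
  (A *m G *m B^T) i j = (row i A *m G *m (row j B)^T) 0 0.
Proof. by rewrite -!row_mul tr_row colE mulmxA -colE !mxE. Qed.

Lemma linfunE_linear (U W : vectType K) (f : U -> W) : linear f -> linfun f =1 f.
Proof. by move=> fL; exact: lfunE (linear_of fL). Qed.

Lemma dimvf_leq_lker (U W : vectType K) (f : 'Hom(U, W)) (Z : {vspace W}) :
  (forall u, f u \in Z) -> (\dim {:U} <= \dim (lker f) + \dim Z)%N.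
Proof.
move=> fZ; rewrite -(limg_ker_dim f fullv) capfv leq_add2l dimvS //.
by apply/subvP => _ /memv_imgP[u _ ->].
Qed.

Lemma linear_rV_expand n (W : lmodType K) (f : 'rV[K]_n -> W) :
  linear f -> forall u, f u = \sum_j u 0 j *: f (delta_mx 0 j).
Proof.
move=> fL u; rewrite -[f u]/(linear_of fL u) {1}[u]row_sum_delta linear_sum.
by apply: eq_bigr => j _; rewrite linearZ.
Qed.

End LinearAlgebra.

Section GramMatrix.
Import VectorInternalTheory.
Variables (K : fieldType) (V : vectType K) (b : V -> V -> K^o).
Hypotheses (b_linearl : forall y, linear (b^~ y))
           (b_linearr : forall x, linear (b x)).

(* Entries are typed in K rather than K^o so that kermx gram lives over K. *)
Definition gram : 'M[K]_(dim V) :=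
  \matrix_(i, j) b (r2v (delta_mx 0 i)) (r2v (delta_mx 0 j)).

Lemma gramE x y : b (r2v x) (r2v y) = (x *m gram *m y^T) 0 0.
Proof.
have r2vL : linear (@r2v K V) by move=> a u v; rewrite linearP.
rewrite (linear_rV_expand (f := fun x => b (r2v x) (r2v y))); last first.
  by move=> a u v; rewrite /= r2vL b_linearl.
rewrite [RHS]mxE; under [RHS]eq_bigr do rewrite mxE big_distrl.
rewrite [RHS]exchange_big; apply: eq_bigr => i _ /=.
rewrite (linear_rV_expand (f := fun y => b _ (r2v y))); last first.
  by move=> a u v; rewrite /= r2vL b_linearr.
rewrite scaler_sumr; apply: eq_bigr => j _.
by rewrite !mxE scalerA [RHS]mulrAC.
Qed.

Lemma mem_r2v (v : 'rV[K]_(dim V)) (U : {vspace V}) :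
  (r2v v \in U) = (v <= vs2mx U)%MS.
Proof. by rewrite memvE /subsetv genmxE r2vK. Qed.

Lemma dimv_isotropic (S Rad : {vspace V}) :
  (forall x, (forall y, b x y = 0) -> x \in Rad) ->
  {in S &, forall x y, b x y = 0} ->
  (2 * \dim S <= \dim {:V} + \dim Rad)%N.
Proof.
move=> radP isoS.
have S_iso : vs2mx S *m gram *m (vs2mx S)^T = 0.
  apply/matrixP => i j; rewrite mulmx_trE -gramE mxE.
  by apply: isoS; rewrite mem_r2v row_sub.
have ker_rad : (kermx gram <= vs2mx Rad)%MS.
  apply/row_subP => i; rewrite -mem_r2v; apply: radP => y.
  by rewrite -[y]v2rK gramE -row_mul mulmx_ker row0 !mul0mx mxE.
have := mxrank_isotropic S_iso; have := mxrankS ker_rad.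
rewrite dimvf /dimv; lia.
Qed.

End GramMatrix.

Section LieForms.
Variables (R : realType) (V : vectType R).

Lemma bilinear_linearl (W : lmodType R) (f : V -> V -> W) :
  bilinear_map f -> forall y, linear (f^~ y).
Proof. by case=> fL _ y a x x'; apply: fL. Qed.

Lemma bilinear_linearr (W : lmodType R) (f : V -> V -> W) :
  bilinear_map f -> forall x, linear (f x).
Proof. by case=> _ fR x a y y'; apply: fR. Qed.

Lemma alternating_skew (W : lmodType R) (f : V -> V -> W) :
  bilinear_map f -> alternating_map f -> forall x y, f x y = - f y x.
Proof.
move=> fB f_alt x y; apply/eqP; rewrite -addr_eq0.
have fDl t x1 x2 : f (x1 + x2) t = f x1 t + f x2 t.
  exact: linearD (linear_of (bilinear_linearl fB t)) x1 x2.
have fDr t y1 y2 : f t (y1 + y2) = f t y1 + f t y2.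
  exact: linearD (linear_of (bilinear_linearr fB t)) y1 y2.
have := f_alt (x + y); rewrite fDl !fDr !f_alt.
by rewrite add0r addr0 => ->.
Qed.

Variables (br : V -> V -> V) (Z : {vspace V}) (w : V -> V -> R^o).

Lemma form_radical_sub_center z u x : non_singular br Z ->
  z \in Z -> w z u != 0 -> (forall y, w (br x y) u = 0) -> x \in Z.
Proof.
move=> Zns Zz wzu_neq0 x_rad; apply: contraT => xZ.
have [y xyz] := Zns x xZ z Zz.
by rewrite -xyz x_rad eqxx in wzu_neq0.
Qed.

Lemma closed_form_centralizer u x y : is_lie_bracket br -> two_form w ->
  closed_form br w -> br u x = 0 -> br u y = 0 -> w (br x y) u = 0.
Proof.
case=> brB br_alt _ [wB _] w_closed ux0 uy0.
have w0 t : w 0 t = 0 := linear0 (linear_of (bilinear_linearl wB t)).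
have := w_closed x y u.
by rewrite (alternating_skew brB br_alt y u) uy0 ux0 oppr0 !w0 !addr0.
Qed.

End LieForms.

Theorem mainTheorem2 (R : realType) (V : vectType R) (br : V -> V -> V)
    (Z : {vspace V}) :
  two_step_nilpotent br -> is_center br Z -> non_singular br Z ->
  (\dim (fullv : {vspace V}) > 3 * \dim Z)%N ->
  forall w : V -> V -> R^o, two_form w -> closed_form br w ->
  forall z u, z \in Z -> w z u = 0.
Proof.
move=> [br_lie [br_nil _]] Zcenter Zns dimZ w w_form w_closed z u Zz.
have [//|wzu_neq0] := eqVneq (w z u) 0.
have [[brB _ _] [wB _]] := (br_lie, w_form).
have ad_u_linear := bilinear_linearr brB u.
pose C := lker (linfun (br u)).
have memC x : (x \in C) = (br u x == 0) by rewrite memv_ker linfunE_linear.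
have dimC : (\dim {:V} <= \dim C + \dim Z)%N.
  apply: dimvf_leq_lker => x; rewrite linfunE_linear //.
  by apply/Zcenter => y; apply: br_nil.
have isoC : (2 * \dim C <= \dim {:V} + \dim Z)%N.
  apply: (@dimv_isotropic _ _ (fun x y => w (br x y) u)).
  - by move=> y a x x'; rewrite /= bilinear_linearl // bilinear_linearl.
  - by move=> x a y y'; rewrite /= bilinear_linearr // bilinear_linearl.
  - by move=> x; apply: form_radical_sub_center Zns Zz wzu_neq0.
  - move=> x y; rewrite !memC => /eqP ux0 /eqP uy0.
    exact: closed_form_centralizer br_lie w_form w_closed ux0 uy0.
lia.
Qed.
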